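(* Let $A$ be an $n\times(n+1)$ matrix over a commutative ring with columns $A_1,\dots,A_{n+1}$. For $1\le l\le n+1$ let $A^{(l)}$ be the $n\times n$ matrix obtained from $A$ by deleting the column $A_l$. For a subset $I\subset\{1,\dots,n\}$ let $A(I)$ be the $n\times n$ matrix whose $i$-th row equals the $i$-th row of $A^{(n+1)}$ if $i\in I$ and the $i$-th row of $A^{(1)}$ if $i\notin I$. Then for every $1\le l\le n+1$, $$\det A^{(l)}=\sum_{I\subset\{1,\dots,n\},\ |I|=l-1}\det A(I).$$ *)

From mathcomp Require Import all_boot all_order all_algebra.
Set Implicit Arguments. Unset Strict Implicit. Unset Printing Implicit Defensive.
Import GRing.Theory.
Local Open Scope ring_scope.

(* A^(l): delete column l (0-based index l : 'I_n.+1) of an n x (n+1) matrix *)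
Definition delcol (R : comPzRingType) (n : nat) (A : 'M[R]_(n, n.+1)) (l : 'I_n.+1)
  : 'M[R]_n := colsub (lift l) A.

Definition mixmx (R : comPzRingType) (n : nat) (A : 'M[R]_(n, n.+1)) (I : {set 'I_n})
  : 'M[R]_n :=
  \matrix_(i < n, j < n)
    (if i \in I then delcol A ord_max i j else delcol A ord0 i j).

From mathcomp Require Import all_boot all_order all_algebra.
From mathcomp Require Import fingroup perm.
Set Implicit Arguments. Unset Strict Implicit. Unset Printing Implicit Defensive.
Import GRing.Theory.
Local Open Scope ring_scope.

(* Expanding every det (A(I)) over permutations and substituting J := s @: I
   for the permutation s turns the sum over the row sets I into a sum over
   column selections: row i of the term indexed by (s, J) reads column
   mixcol J (s i), i.e. column j or j + 1 according as j := s i lies in J or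
   not.  Such a selection repeats a column, killing the determinant, as soon
   as some j is outside J while j + 1 is inside; the only l-set without such
   a step is {0, ..., l - 1}, whose selection skips exactly column l. *)

Lemma rising_edge (P : pred nat) (b a : nat) :
  (b < a)%N -> ~~ P b -> P a -> exists m, [/\ (b <= m < a)%N, ~~ P m & P m.+1].
Proof.
move=> ba nPb Pa; have exP : exists k, (b < k)%N && P k by exists a; rewrite ba.
case: (ex_minnP exP) => k /andP[bk Pk] k_min.
have kE : k = k.-1.+1 by rewrite prednK // (leq_ltn_trans _ bk).
exists k.-1; rewrite -kE Pk; split=> //.
- by rewrite -ltnS -kE bk k_min // ba Pa.
- apply/negP => Pk1; case: (ltnP b k.-1) => [bk1 | k1b].
  + by have := k_min _ (introT andP (conj bk1 Pk1)); rewrite {1}kE ltnn.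
  + suff k1E : k.-1 = b by rewrite -k1E Pk1 in nPb.
    by apply/eqP; rewrite eqn_leq k1b -ltnS -kE bk.
Qed.

Lemma det_colsub_eq0 (R : comPzRingType) n p (A : 'M[R]_(n, p)) (f : 'I_n -> 'I_p)
  (a b : 'I_n) : a != b -> f a = f b -> \det (colsub f A) = 0.
Proof.
by move=> ab fab; rewrite -det_tr; apply: (determinant_alternate ab) => i; rewrite !mxE fab.
Qed.

Definition initial_seg n (k : nat) : {set 'I_n} := [set j : 'I_n | (j < k)%N].

Lemma card_initial_seg n k : (k <= n)%N -> #|initial_seg n k| = k.
Proof.
move=> kn; rewrite -sum1_card.
under eq_bigl do rewrite inE.
by rewrite -(big_ord_widen _ (fun=> 1%N) kn) sum1_card card_ord.
Qed.

Definition mixcol n (J : {set 'I_n}) (j : 'I_n) : 'I_n.+1 :=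
  if j \in J then lift ord_max j else lift ord0 j.

Lemma mixcol_initial_seg n (l : 'I_n.+1) : mixcol (initial_seg n l) =1 lift l.
Proof.
move=> j; apply: ord_inj; rewrite /mixcol inE /= /bump.
by case: ltnP => _; rewrite ?lift0 ?lift_max.
Qed.

Lemma mixcol_collision n (J : {set 'I_n}) : J != initial_seg n #|J| ->
  exists m m' : 'I_n, m != m' /\ mixcol J m = mixcol J m'.
Proof.
move=> neJ; have cardJ : #|J| = #|initial_seg n #|J| |.
  by rewrite card_initial_seg // -[n in (_ <= n)%N]card_ord max_card.
have [a aJ] : exists2 a, a \in J & a \notin initial_seg n #|J|.
  by apply/subsetPn; apply: contra neJ => sJ; apply/eqP/setP/subset_cardP.
have [b] : exists2 b, b \in initial_seg n #|J| & b \notin J.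
  by apply/subsetPn; apply: contra neJ => sJ; apply/eqP/setP => j;
     rewrite (subset_cardP _ sJ).
rewrite !inE -leqNgt => b_lt_k nbJ k_le_a.
pose P k := [exists j in J, val j == k].
have nPb : ~~ P b by apply/exists_inP => -[j jJ /eqP/val_inj jb]; rewrite -jb jJ in nbJ.
have Pa : P a by apply/exists_inP; exists a.
have [m [/andP[_ ma] nPm /exists_inP[m' m'J /eqP m'E]]] :=
  rising_edge (leq_trans b_lt_k k_le_a) nPb Pa.
pose mo := Ordinal (ltn_trans ma (ltn_ord a)).
have moJ : mo \notin J by apply: contra nPm => moJ; apply/exists_inP; exists mo.
exists mo, m'; split.
- by rewrite -val_eqE /= m'E ltn_eqF.
- by apply: ord_inj; rewrite /mixcol (negbTE moJ) m'J lift0 lift_max m'E.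
Qed.

Lemma sum_det_mixmx (R : comPzRingType) n (A : 'M[R]_(n, n.+1)) (k : nat) :
  \sum_(I : {set 'I_n} | #|I| == k) \det (mixmx A I)
  = \sum_(J : {set 'I_n} | #|J| == k) \det (colsub (mixcol J) A).
Proof.
rewrite /determinant (exchange_big _ _ _ (fun I : {set 'I_n} => #|I| == k)).
rewrite [RHS](exchange_big _ _ _ (fun J : {set 'I_n} => #|J| == k)).
apply: eq_bigr => s _; have sV_inj := perm_inj (s := s^-1%g).
rewrite (reindex_inj (imset_inj sV_inj)) /=.
apply: eq_big => [I | I _]; first by rewrite card_imset.
congr (_ * _); apply: eq_bigr => i _.
by rewrite !mxE /mixcol -{1}(permK s i) mem_imset //; case: (s i \in I).
Qed.

Theorem mainTheorem5 (R : comPzRingType) (n : nat) (A : 'M[R]_(n, n.+1)) (l : 'I_n.+1) :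
  \det (delcol A l) = \sum_(I : {set 'I_n} | #|I| == nat_of_ord l) \det (mixmx A I).
Proof.
have card_l : #|initial_seg n l| = l by rewrite card_initial_seg // -ltnS.
rewrite sum_det_mixmx (bigD1 (initial_seg n l)) ?card_l //= big1 ?addr0.
  by congr (\det _); apply/matrixP => i j; rewrite !mxE mixcol_initial_seg.
move=> J /andP[/eqP cardJ neJ].
have /mixcol_collision[m [m' [mm' fmm']]] : J != initial_seg n #|J| by rewrite cardJ.
exact: det_colsub_eq0 mm' fmm'.
Qed.
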